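(* There do not exist a finite set $H$ and functions $f:H\times\Sigma\to H$ and $o:H\times\Sigma\to\{1,-1\}$ such that every word of $\mathcal{L}$ is of the form $\mathrm{out}(x,\sigma)$ for some $x\in H$ and some $\sigma\in\Sigma^*$. Here, for $x\in H$ and $\sigma=s_1\cdots s_m\in\Sigma^*$, we set $h_0=x$, $h_i=f(h_{i-1},s_i)$, and $\mathrm{out}(x,\sigma)=t_1\cdots t_m\in\tilde\Sigma^*$, where $t_i=s_i$ if $o(h_{i-1},s_i)=1$ and $t_i=\tilde s_i$ if $o(h_{i-1},s_i)=-1$. (That is, a deterministic hidden-variable model with finitely many hidden states cannot account for all possible outcome sequences of the experiment.)
   Context: Let $\Sigma=\{A,B,C,a,b,c,\alpha,\beta,\gamma\}$ be nine observables arranged in a $3\times 3$ square with rows $(A,B,C)$, $(a,b,c)$, $(\alpha,\beta,\gamma)$. The six \emph{contexts} are the three rows $\{A,B,C\},\{a,b,c\},\{\alpha,\beta,\gamma\}$ and the three columns $\{A,a,\alpha\},\{B,b,\beta\},\{C,c,\gamma\}$. Each context has a sign: $-1$ for $\{C,c,\gamma\}$ and $+1$ for the other five. Two distinct observables are \emph{compatible} if they lie in a common context, and \emph{incompatible} otherwise. Let $\tilde\Sigma=\{X,\tilde X: X\in\Sigma\}$ (18 letters); the letter $X$ means ''observable $X$ measured with value $1$'' and $\tilde X$ means ''$X$ measured with value $-1$''. For a word $w=t_1\cdots t_m\in\tilde\Sigma^*$ define inductively partial assignments $v_0,\dots,v_m:\Sigma\rightharpoonup\{1,-1\}$ (an observable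 in $\mathrm{dom}(v_i)$ is \emph{determined} after step $i$, with value $v_i(X)$), and whether $w$ is consistent: $v_0$ is the empty assignment. Given $v_{i-1}$, let $t_i$ record observable $X$ with value $\varepsilon$. If $X\in\mathrm{dom}(v_{i-1})$ and $v_{i-1}(X)\ne\varepsilon$, then $w$ is \emph{inconsistent}. Otherwise let $u$ be the restriction of $v_{i-1}$ to observables that are equal to or compatible with $X$, extended by $u(X)=\varepsilon$; then $v_i$ is obtained from $u$ by repeatedly doing the following until nothing changes: whenever a context has exactly two of its observables in the domain, assign the third observable the value making the product of the three values equal to the sign of that context. The word $w$ is \emph{consistent} if no step is inconsistent; $\mathcal{L}$ is the set of consistent words (it contains the empty word). *)

From HB Require Import structures.
From mathcomp Require Import all_boot.
Set Implicit Arguments. Unset Strict Implicit. Unset Printing Implicit Defensive.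

(* The nine observables of the Peres-Mermin square:
   rows (A,B,C), (a,b,c), (alpha,beta,gamma). *)
Inductive obs := oA | oB | oC | oa | ob | oc | oal | obe | oga.

Definition obs_code (x : obs) : 'I_9 :=
  match x with
  | oA => inord 0 | oB => inord 1 | oC => inord 2
  | oa => inord 3 | ob => inord 4 | oc => inord 5
  | oal => inord 6 | obe => inord 7 | oga => inord 8 end.
Definition obs_decode (i : 'I_9) : obs :=
  match val i with
  | 0 => oA | 1 => oB | 2 => oC | 3 => oa | 4 => ob | 5 => oc
  | 6 => oal | 7 => obe | _ => oga end.
Lemma obs_codeK : cancel obs_code obs_decode.
Proof. by case; rewrite /obs_decode /= inordK. Qed.
HB.instance Definition _ := Equality.copy obs (can_type obs_codeK).
HB.instance Definition _ := Choice.copy obs (can_type obs_codeK).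
HB.instance Definition _ := Countable.copy obs (can_type obs_codeK).
HB.instance Definition _ := Finite.copy obs (can_type obs_codeK).

(* Values: [true] encodes +1, [false] encodes -1.  The product of values
   in {1,-1} corresponds to [~~ xor], i.e. product = 1 iff an even number
   of the values are -1. *)
Definition val_mul (e1 e2 : bool) : bool := e1 == e2.

(* The six contexts, each with its sign (true = +1, false = -1). *)
Definition contexts : seq (obs * obs * obs * bool) :=
  [:: (oA, oB, oC, true); (oa, ob, oc, true); (oal, obe, oga, true);
      (oA, oa, oal, true); (oB, ob, obe, true); (oC, oc, oga, false)].

Definition in_context (X : obs) (c : obs * obs * obs * bool) : bool :=
  let: (x, y, z, _) := c in (X == x) || (X == y) || (X == z).

Definition compatible (X Y : obs) : bool :=
  (X != Y) && has (fun c => in_context X c && in_context Y c) contexts.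

(* Letters of tilde-Sigma: (X, true) is "X", (X, false) is "tilde X". *)
Definition letter := (obs * bool)%type.

Definition assignment := obs -> option bool.

Definition empty_assignment : assignment := fun _ => None.

Definition upd (v : assignment) (X : obs) (e : bool) : assignment :=
  fun Y => if Y == X then Some e else v Y.

Definition close_context (v : assignment) (c : obs * obs * obs * bool)
  : assignment :=
  let: (x, y, z, s) := c in
  match v x, v y, v z with
  | Some ex, Some ey, None => upd v z (val_mul (val_mul ex ey) s)
  | Some ex, None, Some ez => upd v y (val_mul (val_mul ex ez) s)
  | None, Some ey, Some ez => upd v x (val_mul (val_mul ey ez) s)
  | _, _, _ => v
  end.

Definition close_pass (v : assignment) : assignment :=
  foldl close_context v contexts.

(* Each pass that changes something enlarges the domain, which has at
   most 9 elements, so 9 passes reach the fixed point. *)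
Definition closure (v : assignment) : assignment := iter 9 close_pass v.

Definition step (v : assignment) (X : obs) (e : bool) : assignment :=
  closure (upd (fun Y => if (Y == X) || compatible X Y then v Y else None) X e).

(* Running a word from an assignment; None = inconsistent. *)
Fixpoint run (v : assignment) (w : seq letter) : option assignment :=
  match w with
  | [::] => Some v
  | (X, e) :: w' =>
      match v X with
      | Some e' => if e' != e then None else run (step v X e) w'
      | None => run (step v X e) w'
      end
  end.

Definition consistent (w : seq letter) : Prop := run empty_assignment w <> None.

Fixpoint out (H : Type) (f : H -> obs -> H) (o : H -> obs -> bool)
  (x : H) (sigma : seq obs) : seq letter :=
  match sigma with
  | [::] => [::]
  | s :: sigma' => (s, o x s) :: out f o (f x s) sigma'
  end.

From Pilot Require Import Defs.
From mathcomp Require Import all_boot.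

(* The key observation is that measuring X never determines an observable
   incompatible with X: the set  star X = {X} + {observables compatible
   with X}  is closed under the completion rule (a context meeting it in two
   points lies inside it), so every updated assignment is supported in it.
   Consequently, in a word that alternates between the incompatible
   observables A and b, each letter meets an undetermined observable, and
   all 2^n value patterns of length n are consistent.  A model with state
   set H realises, for the fixed observable sequence of length n, at most
   #|H| value patterns (one per initial state), so 2^n <= #|H|; taking
   n = #|H| contradicts n < 2^n. *)

(* Boolean equality on observables that reduces by computation; [obs_eqE]
   lets concrete facts about [==] on observables be decided by evaluation. *)
Definition obs_eqb (x y : obs) : bool :=
  match x, y with
  | oA, oA | oB, oB | oC, oC | oa, oa | ob, ob | oc, oc
  | oal, oal | obe, obe | oga, oga => true
  | _, _ => false
  end.

Lemma obs_eqE (x y : obs) : (x == y) = obs_eqb x y.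
Proof. by case: x; case: y; first [rewrite eqxx | apply/eqP]. Qed.

Definition supported_in (v : assignment) (S : pred obs) : Prop :=
  forall Y, ~~ S Y -> v Y = None.

Definition context_closed (S : pred obs) (c : obs * obs * obs * bool) : bool :=
  let: (x, y, z, _) := c in
  (2 <= count S [:: x; y; z]) ==> all S [:: x; y; z].

Lemma supported_determined (v : assignment) (S : pred obs) (Y : obs) (e : bool) :
  supported_in v S -> v Y = Some e -> S Y.
Proof. by move=> suppv vY; apply/negPn/negP => /suppv; rewrite vY. Qed.

Lemma upd_supported (v : assignment) (S : pred obs) (X : obs) (e : bool) :
  supported_in v S -> S X -> supported_in (upd v X e) S.
Proof.
move=> suppv SX Y SY; rewrite /upd; case: eqP => [YX|_]; last exact: suppv.
by move: SY; rewrite YX SX.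
Qed.

Lemma close_context_supported (v : assignment) (S : pred obs) c :
  context_closed S c -> supported_in v S -> supported_in (close_context v c) S.
Proof.
case: c => [[[x y] z] s] /= closedS suppv.
have inS Y e : v Y = Some e -> S Y by exact: supported_determined.
have [xy_z xz_y yz_x] : [/\ S x -> S y -> S z, S x -> S z -> S y
                          & S y -> S z -> S x].
  by move: closedS; case: (S x); case: (S y); case: (S z).
case vx: (v x) => [ex|]; case vy: (v y) => [ey|]; case vz: (v z) => [ez|] //=;
  apply: upd_supported => //.
- exact: xy_z (inS _ _ vx) (inS _ _ vy).
- exact: xz_y (inS _ _ vx) (inS _ _ vz).
- exact: yz_x (inS _ _ vy) (inS _ _ vz).
Qed.

Lemma close_pass_supported (v : assignment) (S : pred obs) :
  all (context_closed S) contexts -> supported_in v S ->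
  supported_in (close_pass v) S.
Proof.
rewrite /close_pass; elim: contexts v => [//|c cs IHcs] v /= /andP[closed_c closed_cs].
by move=> suppv; apply: IHcs => //; apply: close_context_supported.
Qed.

Lemma closure_supported (v : assignment) (S : pred obs) :
  all (context_closed S) contexts -> supported_in v S ->
  supported_in (Defs.closure v) S.
Proof.
move=> closedS suppv; rewrite /Defs.closure.
by elim: 9 => [//|k IHk] /=; apply: close_pass_supported.
Qed.

Definition star (X : obs) : pred obs := fun Y => (Y == X) || compatible X Y.

Lemma star_context_closed (X : obs) : all (context_closed (star X)) contexts.
Proof. by case: X; rewrite /= /star /compatible /in_context /= !obs_eqE. Qed.

Lemma step_supported (v : assignment) (X : obs) (e : bool) :
  supported_in (step v X e) (star X).
Proof.
apply: closure_supported; first exact: star_context_closed.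
apply: upd_supported; last by rewrite /star eqxx.
by move=> Y; rewrite /star => /negbTE ->.
Qed.

Definition incompatible (X Y : obs) : bool := (X != Y) && ~~ compatible X Y.

Lemma step_incompatible (v : assignment) (X Y : obs) (e : bool) :
  incompatible X Y -> step v X e Y = None.
Proof.
case/andP=> neqXY ncompXY; apply: step_supported.
by rewrite /star eq_sym (negbTE neqXY) (negbTE ncompXY).
Qed.

Lemma run_undetermined (v : assignment) (X : obs) (e : bool) (w : seq letter) :
  v X = None -> run v ((X, e) :: w) = run (step v X e) w.
Proof. by move=> vX; rewrite /= vX. Qed.

Lemma run_incompatible_chain (w : seq letter) (v : assignment) (X : obs) (e : bool) :
  v X = None -> path incompatible X (unzip1 w) -> run v ((X, e) :: w) <> None.
Proof.
elim: w v X e => [|[Y e'] w IHw] v X e vX; first by rewrite run_undetermined.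
move=> /andP[incXY chain]; rewrite run_undetermined //.
by apply: IHw chain; apply: step_incompatible.
Qed.

Fixpoint alternate (X Y : obs) (n : nat) : seq obs :=
  if n is n'.+1 then X :: alternate Y X n' else [::].

Lemma size_alternate (X Y : obs) (n : nat) : size (alternate X Y n) = n.
Proof. by elim: n X Y => [|n IHn] X Y //=; rewrite IHn. Qed.

Lemma path_alternate (X Y : obs) (n : nat) :
  incompatible X Y -> incompatible Y X -> path incompatible X (alternate Y X n).
Proof. by elim: n X Y => [|n IHn] X Y //= incXY incYX; rewrite incXY IHn. Qed.

Lemma alternate_consistent (X Y : obs) (t : seq bool) :
  incompatible X Y -> incompatible Y X ->
  consistent (zip (alternate X Y (size t)) t).
Proof.
case: t => [|e t] incXY incYX; first by [].
change (run empty_assignment ((X, e) :: zip (alternate Y X (size t)) t) <> None).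
apply: run_incompatible_chain => //.
by rewrite unzip1_zip ?size_alternate // path_alternate.
Qed.

Lemma unzip1_out {H : Type} (f : H -> obs -> H) (o : H -> obs -> bool)
    (x : H) (sigma : seq obs) :
  unzip1 (out f o x sigma) = sigma.
Proof. by elim: sigma x => [|s sigma IHs] x //=; rewrite IHs. Qed.

Lemma patterns_card {H : finType} {g : H -> seq bool} {n : nat} :
  (forall t : n.-tuple bool, exists x, g x = t) -> 2 ^ n <= #|H|.
Proof.
move=> onto; rewrite -[2]card_bool -card_tuple.
have [x0 _] := onto (nseq_tuple n true).
pose inv (t : n.-tuple bool) := odflt x0 [pick x | g x == t].
have invK t : g (inv t) = t.
  rewrite /inv; case: pickP => [x /eqP //|none].
  by have [x gx] := onto t; move: (none x); rewrite gx eqxx.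
apply: (leq_card inv) => t1 t2 eq_inv; apply: val_inj.
by rewrite /= -invK eq_inv invK.
Qed.

(* A and b lie in different rows and different columns. *)
Lemma incompatible_A_b : incompatible oA ob && incompatible ob oA.
Proof. by rewrite /incompatible /compatible /in_context /= !obs_eqE. Qed.

Theorem mainTheorem5 :
  ~ exists (H : finType) (f : H -> obs -> H) (o : H -> obs -> bool),
      forall w : seq letter, consistent w ->
        exists (x : H) (sigma : seq obs), out f o x sigma = w.
Proof.
move=> [H [f [o realises]]]; set n := #|H|.
have /andP[incAb incbA] := incompatible_A_b.
have patterns (t : n.-tuple bool) :
    exists x, unzip2 (out f o x (alternate oA ob n)) = t.
  have := alternate_consistent oA ob t incAb incbA; rewrite size_tuple => consistent_t.
  have [x [sigma out_t]] := realises _ consistent_t; exists x.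
  have -> : alternate oA ob n = sigma.
    by rewrite -(unzip1_out f o x sigma) out_t unzip1_zip // size_alternate size_tuple leqnn.
  by rewrite out_t unzip2_zip // size_alternate size_tuple leqnn.
have := patterns_card patterns.
by rewrite leqNgt ltn_expl.
Qed.
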